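(* If $L$ is an oriented classical link, then its forbidden matrix $\mathcal{FM}(L)$ is symmetric.
   Context: An oriented (classical or virtual) link with $n$ components is represented by a signed Gauss diagram: $n$ oriented circles, one per component, with arrows from over-crossing point to under-crossing point, each arrow carrying the sign $\pm1$ of its crossing. A classical link is one representable by a planar link diagram. The forbidden moves are: interchange two adjacent arrowheads, or two adjacent arrow tails, on a circle. Using forbidden and Reidemeister moves, a Gauss diagram can be reduced to one with no arrow having both endpoints on the same circle and in which, for each ordered pair $(j,k)$ of distinct circles, all arrows from circle $j$ to circle $k$ have the same sign. The forbidden quiver $\mathcal{FQ}(L)$ is obtained by shrinking each circle of this reduced diagram to a vertex; $m$ parallel arrows of sign $\varepsilon$ from vertex $j$ to vertex $k$ are recorded as a single arrow with integer label $\varepsilon m$. The forbidden matrix $\mathcal{FM}(L)$ is the $n\times n$ integer matrix whose $(j,k)$ entry is the label on the arrow from vertex $j$ to vertex $k$ of $\mathcal{FQ}(L)$ ($0$ if there is none). *)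

From mathcomp Require Import all_boot all_order all_algebra.
From Stdlib Require Import Relations.
Set Implicit Arguments. Unset Strict Implicit. Unset Printing Implicit Defensive.
Import GRing.Theory Num.Theory.

(* An endpoint is a pair (a, h) : nat * bool, where a is the label of the    *)
(* arrow (= crossing) and h = true means "arrowhead" (under-crossing point), *)
(* h = false means "arrow tail" (over-crossing point).  Circle j is the      *)
(* cyclic word [circ D j] of endpoints, read along the orientation of the    *)
(* j-th component (the word is considered up to rotation, see [rot_move]).   *)
(* [sgn D a] is the sign of arrow a : true = +1, false = -1.                 *)
Record gauss (n : nat) := Gauss {
  circ : 'I_n -> seq (nat * bool);
  sgn  : nat -> bool
}.

Section GaussDefs.
Variable n : nat.
Implicit Types D : gauss n.

Definition endpoints D : seq (nat * bool) :=
  flatten [seq circ D j | j <- enum 'I_n].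

Definition labels D : seq nat := undup [seq e.1 | e <- endpoints D].

Definition wf_gauss D : bool :=
  uniq (endpoints D) &&
  all (fun e => (e.1, ~~ e.2) \in endpoints D) (endpoints D).

(* the cyclic word of circle j is rotated (this does not change the diagram; *)
(* it makes cyclic adjacency available as linear adjacency)                  *)
Definition rot_move D D' : Prop :=
  sgn D' =1 sgn D /\
  exists j, circ D' j = rot 1 (circ D j) /\
            forall k, k != j -> circ D' k = circ D k.

Definition swap_at D D' (x y : nat * bool) : Prop :=
  sgn D' =1 sgn D /\
  exists j s1 s2, circ D j = s1 ++ x :: y :: s2 /\
                  circ D' j = s1 ++ y :: x :: s2 /\
                  forall k, k != j -> circ D' k = circ D k.

Definition forbidden_move D D' : Prop :=
  exists x y : nat * bool, x.2 = y.2 /\ swap_at D D' x y.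

(* Reidemeister I (creation of an isolated arrow with adjacent endpoints,   *)
(* of either direction and either sign; removal is the inverse move)        *)
Definition R1_move D D' : Prop :=
  exists (a : nat) (b : bool) j s1 s2,
    a \notin labels D /\
    circ D j = s1 ++ s2 /\
    circ D' j = s1 ++ (a, b) :: (a, ~~ b) :: s2 /\
    (forall k, k != j -> circ D' k = circ D k) /\
    (forall x, x != a -> sgn D' x = sgn D x).

(* Reidemeister II (creation of two arrows a, c of opposite signs with      *)
(* adjacent tails and adjacent heads, heads in either order; removal is the *)
(* inverse move)                                                            *)
Definition R2_move D D' : Prop :=
  exists (a c : nat),
    [/\ a != c, a \notin labels D & c \notin labels D] /\
    sgn D' a != sgn D' c /\
    (forall x, x != a -> x != c -> sgn D' x = sgn D x) /\
    let T := [:: (a, false); (c, false)] in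
    exists H, (H = [:: (a, true); (c, true)] \/ H = [:: (c, true); (a, true)]) /\
    ((exists j k s1 s2 t1 t2,
        j != k /\ circ D j = s1 ++ s2 /\ circ D' j = s1 ++ T ++ s2 /\
        circ D k = t1 ++ t2 /\ circ D' k = t1 ++ H ++ t2 /\
        (forall l, l != j -> l != k -> circ D' l = circ D l))
     \/
     (exists j s1 s2 s3,
        circ D j = s1 ++ s2 ++ s3 /\
        (circ D' j = s1 ++ T ++ s2 ++ H ++ s3 \/
         circ D' j = s1 ++ H ++ s2 ++ T ++ s3) /\
        (forall l, l != j -> circ D' l = circ D l))).

Definition ordpair (o : bool) (x y : nat * bool) :=
  if o then (x, y) else (y, x).

(* Reidemeister III.  Arrows a : T -> M, b : T -> B, c : M -> B (top,      *)
(* middle, bottom strands) whose endpoints form three adjacent pairs:       *)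
(* tails of a and b; head of a and tail of c; heads of b and c.  The move   *)
(* reverses the order inside each of the three pairs.  oT, oM, oB record the *)
(* orders before the move (oT: tail of a before tail of b; oM: head of a    *)
(* before tail of c; oB: head of b before head of c).  The configurations   *)
(* realized by three oriented lines in the plane are exactly those with     *)
(*   oT (+) oM = sgn b (+) sgn c   and   oM (+) oB = sgn a (+) sgn b.       *)
Definition R3_move D D' : Prop :=
  exists (a b c : nat) (oT oM oB : bool) (D1 D2 : gauss n),
    (oT (+) oM = sgn D b (+) sgn D c) /\
    (oM (+) oB = sgn D a (+) sgn D b) /\
    swap_at D D1 (ordpair oT (a, false) (b, false)).1
                 (ordpair oT (a, false) (b, false)).2 /\
    swap_at D1 D2 (ordpair oM (a, true) (c, false)).1
                  (ordpair oM (a, true) (c, false)).2 /\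
    swap_at D2 D' (ordpair oB (b, true) (c, true)).1
                  (ordpair oB (b, true) (c, true)).2.

Definition reidemeister_step D D' : Prop :=
  [\/ rot_move D D', R1_move D D', R2_move D D' | R3_move D D'].

Definition move_step D D' : Prop :=
  reidemeister_step D D' \/ forbidden_move D D'.

Definition FR_equiv : relation (gauss n) := clos_refl_sym_trans _ move_step.

Definition reduced D : Prop :=
  (forall j e, e \in circ D j -> (e.1, ~~ e.2) \notin circ D j) /\
  (forall j k e1 e2,
      e1 \in circ D j -> e2 \in circ D j -> e1.2 = false -> e2.2 = false ->
      (e1.1, true) \in circ D k -> (e2.1, true) \in circ D k ->
      sgn D e1.1 = sgn D e2.1).

(* signed count of arrows from circle j (tail) to circle k (head).  On a    *)
(* reduced diagram this is eps * m where m is the number of such arrows and *)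
(* eps their common sign, i.e. the label of the arrow j -> k of the         *)
(* forbidden quiver (0 if there is none).                                   *)
Definition FM_entry D (j k : 'I_n) : int :=
  \sum_(e <- circ D j | (e.2 == false) && ((e.1, true) \in circ D k))
     (if sgn D e.1 then 1 else -1).

Definition forbidden_matrix D : 'M[int]_n := \matrix_(j, k) FM_entry D j k.

(* A Gauss diagram is the Gauss diagram of a planar (equivalently, spherical) *)
(* link diagram iff the associated combinatorial map (4-valent vertices =     *)
(* crossings, with the cyclic order of half-edges determined by the crossing  *)
(* sign, edges = arcs of the circles between consecutive endpoints) is a      *)
(* disjoint union of genus-0 maps, i.e. #faces = #vertices + 2 #components    *)
(* (Euler: V - E + F = 2 on each component, E = 2V).                           *)

Definition maxlab D : nat := \max_(e <- endpoints D) e.1.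

(* darts: (crossing, under?, outgoing?) *)
Definition dart D := ('I_(maxlab D).+1 * bool * bool)%type.

Definition nextD D (e : nat * bool) : nat * bool :=
  foldr (fun c r => if e \in c then next c e else r) e [seq circ D j | j <- enum 'I_n].
Definition prevD D (e : nat * bool) : nat * bool :=
  foldr (fun c r => if e \in c then prev c e else r) e [seq circ D j | j <- enum 'I_n].

(* edge involution: the outgoing half-edge at an endpoint is joined to the   *)
(* incoming half-edge at the next endpoint of the same circle                *)
Definition alphaD D (x : dart D) : dart D :=
  let: (a, u, o) := x in
  if o then let e := nextD D (val a, u) in (inord e.1, e.2, false)
  else let e := prevD D (val a, u) in (inord e.1, e.2, true).
Arguments alphaD : clear implicits.

(* counterclockwise rotation at a crossing.  Positive crossing:              *)
(*   over-out -> under-out -> over-in -> under-in -> over-out;               *)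
(* negative crossing:                                                         *)
(*   over-out -> under-in -> over-in -> under-out -> over-out.               *)
Definition sigmaD D (x : dart D) : dart D :=
  let: (a, u, o) := x in
  if sgn D (val a) then (a, ~~ u, u (+) o) else (a, ~~ u, u == o).
Arguments sigmaD : clear implicits.

Definition phiD D (x : dart D) : dart D := sigmaD D (alphaD D x).
Arguments phiD : clear implicits.

Definition used_dart D : pred (dart D) :=
  [pred x | (val x.1.1, false) \in endpoints D].

Definition dart_rel D : rel (dart D) :=
  [rel x y | [|| y == sigmaD D x, x == sigmaD D y, y == alphaD D x | x == alphaD D y]].

Arguments used_dart : clear implicits.
Arguments dart_rel : clear implicits.

Definition nfaces D : nat := fcard (phiD D) (used_dart D).
Definition ncomps D : nat := n_comp (dart_rel D) (used_dart D).

Definition planar_gauss D : bool :=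
  nfaces D == size (labels D) + 2 * ncomps D.

End GaussDefs.

(* Off the diagonal, FM(j,k) is the signed number of arrows from circle j to
   circle k.  Rotations and forbidden moves only permute endpoints, R1 and R2
   insert arrows that are either on one circle or form a pair of opposite
   signs, and R3 is a composite of three swaps, so these entries are
   FR-invariant and it suffices to prove FM(j,k) = FM(k,j) for the planar
   diagram D.
   The darts of D form a 4-valent map with F faces, V crossings, E = 2V arcs
   and C components.  Planarity F = V + 2C makes the face boundaries span the
   cycle space (of dimension E - V + C), so the flow along circle k is the
   coboundary of a function w on faces: w jumps by 1 across each arc of
   circle k.  Going once around circle j, w changes at each crossing with
   circle k by the sign of that crossing, positively where j passes over k
   and negatively where it passes under, so the total change
   FM(j,k) - FM(k,j) is 0. *)

From mathcomp Require Import all_boot all_order all_algebra.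
From Stdlib Require Import Relations.
From mathcomp Require Import zify ring lra.
Set Implicit Arguments. Unset Strict Implicit. Unset Printing Implicit Defensive.
Import GRing.Theory Num.Theory.

Local Open Scope ring_scope.

Lemma uniq_flatten_map (I T : eqType) (f : I -> seq T) (s : seq I) :
  uniq (flatten (map f s)) ->
  {in s, forall i, uniq (f i)} /\
  (forall i j x, i \in s -> j \in s -> x \in f i -> x \in f j -> i = j).
Proof.
elim: s => [|i0 s IH] /=; first by split=> // i; rewrite in_nil.
rewrite cat_uniq => /and3P[uniq_i0 disj uniq_s]; have [IHu IHd] := IH uniq_s.
split=> [i|]; first by rewrite inE => /predU1P[->|/IHu].
have notin_s j x : j \in s -> x \in f i0 -> x \in f j -> False.
  by move=> jS xi0 xj; move/hasP: disj; apply; exists x => //; apply/flatten_mapP; exists j.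
move=> i j x; rewrite !inE => /predU1P[->|iS] /predU1P[->|jS] xi xj //.
- by case: (notin_s _ _ jS xi xj).
- by case: (notin_s _ _ iS xj xi).
- exact: IHd xi xj.
Qed.

Section FirstMember.
Variables (T : eqType) (g : seq T -> T) (x : T) (cs : seq (seq T)).

Definition first_member_image :=
  foldr (fun c r => if x \in c then g c else r) x cs.

Lemma first_member_imageE v :
  (forall c, c \in cs -> x \in c -> g c = v) -> x \in flatten cs -> first_member_image = v.
Proof.
rewrite /first_member_image; elim: cs => [|c cs' IH] //= gE; rewrite mem_cat.
case: ifP => [xc _|_ xcs]; first by apply: gE; rewrite ?mem_head.
by apply: IH => // c' c'cs; apply: gE; rewrite inE c'cs orbT.
Qed.

Lemma first_member_image_default : x \notin flatten cs -> first_member_image = x.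
Proof.
rewrite /first_member_image; elim: cs => [|c cs' IH] //=.
by rewrite mem_cat negb_or => /andP[/negbTE -> /IH].
Qed.

End FirstMember.

Section RankBounds.
Variable F : fieldType.

Lemma rank_leq_col_inj m N c (S : 'M[F]_(m, N)) (R : 'M[F]_(N, c)) :
  (forall v : 'rV_N, (v <= S)%MS -> v *m R = 0 -> v = 0) -> (\rank S <= c)%N.
Proof.
move=> R_inj; have := mxrank_mul_ker S R.
have -> : (S :&: kermx R)%MS = 0.
  apply/row_matrixP => i; rewrite row0; apply: R_inj.
    exact: submx_trans (row_sub i _) (capmxSl _ _).
  by apply/sub_kermxP; apply: submx_trans (row_sub i _) (capmxSr _ _).
by rewrite mxrank0 addn0 => <-; apply: rank_leq_col.
Qed.

(* Exactness of [A -> B -> C] in the middle from a dimension count. *)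
Lemma kermx_sub_mul_of_rank f m e v (A : 'M[F]_(f, m)) (B : 'M_(m, e)) (C : 'M_(e, v)) :
  A *m B *m C = 0 ->
  (\rank (A :&: kermx B) + \rank (kermx C^T) + e <= \rank A + v)%N ->
  (kermx C <= A *m B)%MS.
Proof.
move=> ABC0 rank_le; have AB_C : (A *m B <= kermx C)%MS by apply/sub_kermxP.
rewrite -(mxrank_leqif_sup AB_C).2 eqn_leq mxrankS //=.
have := mxrank_mul_ker A B; rewrite mxrank_ker.
move: rank_le; rewrite mxrank_ker mxrank_tr.
have := rank_leq_col C; have := rank_leq_row C; lia.
Qed.

End RankBounds.

Lemma sum_enum_val_eq (R : nzSemiRingType) (T : finType) (a : 'I_#|T| -> R) (z : T) :
  \sum_i a i * (enum_val i == z)%:R = a (enum_rank z).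
Proof.
rewrite (bigD1 (enum_rank z)) //= enum_rankK eqxx mulr1 big1 ?addr0 // => i ne.
rewrite (_ : (enum_val i == z) = false) ?mulr0 //.
by apply: contraNF ne => /eqP <-; rewrite enum_valK.
Qed.

Section MoveInvariance.
Variable n : nat.
Implicit Types (D : gauss n) (X : 'I_n -> seq (nat * bool)).

Definition crossing_sign D (a : nat) : int := if sgn D a then 1 else -1.

Definition arrow_count D X (j k : 'I_n) : int :=
  \sum_(e <- X j | (e.2 == false) && ((e.1, true) \in X k)) crossing_sign D e.1.

Lemma FM_entryE D : FM_entry D =2 arrow_count D (circ D).
Proof. by []. Qed.

Lemma mem_circ_endpoints D j e : e \in circ D j -> e \in endpoints D.
Proof. by move=> ej; apply/flatten_mapP; exists j; rewrite ?mem_enum. Qed.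

Lemma mem_circ_labels D j e : e \in circ D j -> e.1 \in labels D.
Proof. by move=> ej; rewrite mem_undup; apply/map_f/(mem_circ_endpoints ej). Qed.

Lemma FM_entry_perm D D' :
  (forall l, perm_eq (circ D l) (circ D' l)) -> sgn D' =1 sgn D ->
  FM_entry D =2 FM_entry D'.
Proof.
move=> circ_perm sgnE j k; rewrite !FM_entryE /arrow_count (perm_big _ (circ_perm j)).
apply: eq_big => [e|e _]; first by rewrite (perm_mem (circ_perm k)).
by rewrite /crossing_sign sgnE.
Qed.

Lemma FM_entry_swap D D' x y : swap_at D D' x y -> FM_entry D =2 FM_entry D'.
Proof.
case=> sgnE [j [s1 [s2 [Dj [D'j D'k]]]]]; apply: FM_entry_perm => // l.
have [->|lj] := eqVneq l j; last by rewrite D'k.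
by rewrite Dj D'j; apply/permP => P; rewrite !count_cat /=; lia.
Qed.

(* [X l] lists the endpoints of fresh arrows inserted on circle [l]. *)
Lemma FM_entry_insert D D' X :
  (forall l, perm_eq (circ D' l) (X l ++ circ D l)) ->
  (forall l e, e \in X l -> e.1 \notin labels D) ->
  {in labels D, sgn D' =1 sgn D} ->
  FM_entry D' =2 (fun j k => FM_entry D j k + arrow_count D' X j k).
Proof.
move=> circ_perm fresh sgnE j k; rewrite !FM_entryE /arrow_count.
rewrite (perm_big _ (circ_perm j)) big_cat /= addrC; congr (_ + _).
  rewrite big_seq_cond [RHS]big_seq_cond; apply: eq_big => [e|e]; last first.
    by case/andP=> ej _; rewrite /crossing_sign sgnE // (mem_circ_labels ej).
  case ej: (e \in circ D j) => //=; congr (_ && _).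
  have notXk : (e.1, true) \notin X k.
    by apply: contraL (mem_circ_labels ej) => /fresh.
  by rewrite (perm_mem (circ_perm k)) mem_cat (negbTE notXk).
rewrite big_seq_cond [RHS]big_seq_cond; apply: eq_bigl => e.
case Xj: (e \in X j) => //=; congr (_ && _).
rewrite (perm_mem (circ_perm k)) mem_cat; case: (_ \in X k) => //=.
by apply/negP => /mem_circ_labels; apply/negP; apply: (fresh _ _ Xj).
Qed.

Lemma FM_entry_insert_offdiag D D' X :
  (forall l, perm_eq (circ D' l) (X l ++ circ D l)) ->
  (forall l e, e \in X l -> e.1 \notin labels D) ->
  {in labels D, sgn D' =1 sgn D} ->
  (forall j k, j != k -> arrow_count D' X j k = 0) ->
  forall j k, j != k -> FM_entry D j k = FM_entry D' j k.
Proof.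
by move=> Xperm fresh sgnE X0 j k jk; rewrite (FM_entry_insert Xperm fresh sgnE) X0 ?addr0.
Qed.

Lemma arrow_count_single_circle D X j0 :
  (forall l, l != j0 -> X l = [::]) -> forall j k, j != k -> arrow_count D X j k = 0.
Proof.
move=> X0 j k jk; rewrite /arrow_count.
have [ej|/X0 ->] := eqVneq j j0; last by rewrite big_nil.
have kj0 : k != j0 by rewrite -ej eq_sym.
by rewrite (X0 k kj0) big1 // => e; rewrite in_nil andbF.
Qed.

Lemma FM_entry_rot D D' : rot_move D D' -> FM_entry D =2 FM_entry D'.
Proof.
case=> sgnE [j [D'j D'k]]; apply: FM_entry_perm => // l.
have [->|lj] := eqVneq l j; last by rewrite D'k.
by rewrite D'j perm_sym perm_rot.
Qed.

Lemma FM_entry_R1 D D' : R1_move D D' ->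
  forall j k, j != k -> FM_entry D j k = FM_entry D' j k.
Proof.
case=> a [b [j0 [s1 [s2 [a_fresh [Dj [D'j [D'k sgnE]]]]]]]].
pose X l := if l == j0 then [:: (a, b); (a, ~~ b)] else [::].
apply: (@FM_entry_insert_offdiag D D' X).
- move=> l; rewrite /X; have [->|lj] := eqVneq l j0; last by rewrite D'k.
  by rewrite Dj D'j; apply/permP => P; rewrite !count_cat /=; lia.
- move=> l e; rewrite /X; case: (l == j0); last by rewrite in_nil.
  by rewrite !inE => /orP[] /eqP ->.
- by move=> x xD; apply: sgnE; apply: contraTneq xD => ->.
- by apply: (@arrow_count_single_circle _ X j0) => l /negbTE; rewrite /X => ->.
Qed.

Lemma arrow_count_opposite_pair D a c (H : seq (nat * bool)) j0 k0 :
  sgn D a != sgn D c -> j0 != k0 -> (forall e, e \in H -> e.2) ->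
  (a, true) \in H -> (c, true) \in H ->
  let X l := if l == j0 then [:: (a, false); (c, false)] else if l == k0 then H else [::] in
  forall j k, j != k -> arrow_count D X j k = 0.
Proof.
move=> sgn_ac jk0 H_heads aH cH X j k jk; rewrite /arrow_count /X.
have [ej|jj0] := eqVneq j j0.
  have [ek|kk0] := eqVneq k k0.
    rewrite ek eq_sym (negbTE jk0) !big_cons big_nil /= aH cH addr0 /crossing_sign.
    by move: sgn_ac; case: (sgn D a); case: (sgn D c).
  have kj0 : k != j0 by rewrite -ej eq_sym.
  by rewrite (negbTE kj0) big1 // => e; rewrite in_nil andbF.
case: ifP => _; last by rewrite big_nil.
by rewrite big_seq_cond big1 // => e /andP[/H_heads ->].
Qed.

Lemma FM_entry_R2 D D' : R2_move D D' ->
  forall j k, j != k -> FM_entry D j k = FM_entry D' j k.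
Proof.
case=> a [c [[ac a_fresh c_fresh] [sgn_ac [sgnE [H [HE circE]]]]]].
set T := [:: (a, false); (c, false)] in circE.
have fresh e : e \in T ++ H -> e.1 \notin labels D.
  by rewrite mem_cat; case: HE => ->; rewrite !inE -orbA; case/or4P => /eqP ->.
have sgnE' : {in labels D, sgn D' =1 sgn D}.
  by move=> x xD; apply: sgnE; apply: contraTneq xD => ->.
have H_heads e : e \in H -> e.2 by case: HE => ->; rewrite !inE => /orP[] /eqP ->.
have aH : (a, true) \in H by case: HE => ->; rewrite !inE eqxx ?orbT.
have cH : (c, true) \in H by case: HE => ->; rewrite !inE eqxx ?orbT.
case: circE => [[j0 [k0 [s1 [s2 [t1 [t2 [jk0 [Dj [D'j [Dk [D'k D'l]]]]]]]]]]]|].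
  pose X l := if l == j0 then T else if l == k0 then H else [::].
  apply: (@FM_entry_insert_offdiag D D' X) => //.
  - move=> l; rewrite /X; have [->|lj0] := eqVneq l j0.
      by rewrite Dj D'j; apply/permP => P; rewrite !count_cat /=; lia.
    have [->|lk0] := eqVneq l k0; last by rewrite D'l.
    by rewrite Dk D'k; apply/permP => P; rewrite !count_cat /=; lia.
  - move=> l e; rewrite /X; case: ifP => _; last case: ifP => _; last by rewrite in_nil.
      by move=> eX; apply: fresh; rewrite mem_cat eX.
    by move=> eX; apply: fresh; rewrite mem_cat eX orbT.
  - exact: arrow_count_opposite_pair.
move=> [j0 [s1 [s2 [s3 [Dj [D'j D'l]]]]]].
pose X l := if l == j0 then T ++ H else [::].
apply: (@FM_entry_insert_offdiag D D' X) => //.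
- move=> l; rewrite /X; have [->|lj0] := eqVneq l j0; last by rewrite D'l.
  by case: D'j => ->; rewrite Dj; apply/permP => P; rewrite !count_cat /=; lia.
- by move=> l e; rewrite /X; case: ifP => _; [exact: fresh | rewrite in_nil].
- by apply: (@arrow_count_single_circle _ X j0) => l /negbTE; rewrite /X => ->.
Qed.

Lemma FM_entry_R3 D D' : R3_move D D' -> FM_entry D =2 FM_entry D'.
Proof.
case=> a [b [c [oT [oM [oB [D1 [D2 [_ [_ [sw1 [sw2 sw3]]]]]]]]]]] j k.
by rewrite (FM_entry_swap sw1) (FM_entry_swap sw2) (FM_entry_swap sw3).
Qed.

Lemma FM_entry_forbidden D D' : forbidden_move D D' -> FM_entry D =2 FM_entry D'.
Proof. by case=> x [y [_ /FM_entry_swap]]. Qed.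

Lemma FM_entry_move_step D D' : move_step D D' ->
  forall j k, j != k -> FM_entry D j k = FM_entry D' j k.
Proof.
case=> [[/FM_entry_rot|/FM_entry_R1 //|/FM_entry_R2 //|/FM_entry_R3]|/FM_entry_forbidden];
by move=> FME j k _; apply: FME.
Qed.

Lemma FM_entry_FR_equiv D D' : FR_equiv D D' ->
  forall j k, j != k -> FM_entry D j k = FM_entry D' j k.
Proof.
elim=> {D D'} [D D' /FM_entry_move_step //|//|D D' _ IH|D1 D2 D3 _ IH12 _ IH23] j k jk.
  by rewrite IH.
by rewrite IH12 ?IH23.
Qed.

End MoveInvariance.

Section CircleWalk.
Variables (n : nat) (D : gauss n).
Hypothesis wfD : wf_gauss D.
Local Notation EP := (endpoints D).

Lemma uniq_endpoints : uniq EP.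
Proof. by case/andP: wfD. Qed.

Lemma mem_endpoints_other_end a u v : (a, u) \in EP -> (a, v) \in EP.
Proof.
case/andP: wfD => _ /allP ends; have [-> //|uv] := eqVneq u v.
by move/ends; rewrite /= (_ : ~~ u = v) //; move: uv; case: u; case: v.
Qed.

Lemma endpoint_circ e : e \in EP -> exists j, e \in circ D j.
Proof. by case/flatten_mapP => j _; exists j. Qed.

Lemma circ_disjoint i j e : e \in circ D i -> e \in circ D j -> i = j.
Proof.
have [_ disj] := uniq_flatten_map uniq_endpoints.
by move=> ei ej; apply: disj ei ej; rewrite mem_enum.
Qed.

Lemma uniq_circ j : uniq (circ D j).
Proof. by have [uniq_c _] := uniq_flatten_map uniq_endpoints; apply: uniq_c; rewrite mem_enum. Qed.

Lemma nextDE j e : e \in circ D j -> nextD D e = next (circ D j) e.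
Proof.
move=> ej; apply: (first_member_imageE (g := fun c => next c e)); last exact: mem_circ_endpoints ej.
by move=> c /mapP[i _ ->] ei; rewrite (circ_disjoint ei ej).
Qed.

Lemma prevDE j e : e \in circ D j -> prevD D e = prev (circ D j) e.
Proof.
move=> ej; apply: (first_member_imageE (g := fun c => prev c e)); last exact: mem_circ_endpoints ej.
by move=> c /mapP[i _ ->] ei; rewrite (circ_disjoint ei ej).
Qed.

Lemma nextD_id e : e \notin EP -> nextD D e = e.
Proof. exact: first_member_image_default. Qed.

Lemma prevD_id e : e \notin EP -> prevD D e = e.
Proof. exact: first_member_image_default. Qed.

Lemma mem_nextD_circ j e : (nextD D e \in circ D j) = (e \in circ D j).
Proof.
have [/endpoint_circ[i ei]|eEP] := boolP (e \in EP); last by rewrite nextD_id.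
rewrite (nextDE ei); have [<-|ij] := eqVneq i j; first by rewrite mem_next.
apply/idP/idP => [nj|ej]; case/eqP: ij; last exact: circ_disjoint ei ej.
by apply: circ_disjoint nj; rewrite mem_next.
Qed.

Lemma mem_prevD_circ j e : (prevD D e \in circ D j) = (e \in circ D j).
Proof.
have [/endpoint_circ[i ei]|eEP] := boolP (e \in EP); last by rewrite prevD_id.
rewrite (prevDE ei); have [<-|ij] := eqVneq i j; first by rewrite mem_prev.
apply/idP/idP => [pj|ej]; case/eqP: ij; last exact: circ_disjoint ei ej.
by apply: circ_disjoint pj; rewrite mem_prev.
Qed.

Lemma mem_nextD_endpoints e : (nextD D e \in EP) = (e \in EP).
Proof.
have [/endpoint_circ[i ei]|eEP] := boolP (e \in EP); last by rewrite nextD_id // (negbTE eEP).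
by apply: (mem_circ_endpoints (j := i)); rewrite mem_nextD_circ.
Qed.

Lemma mem_prevD_endpoints e : (prevD D e \in EP) = (e \in EP).
Proof.
have [/endpoint_circ[i ei]|eEP] := boolP (e \in EP); last by rewrite prevD_id // (negbTE eEP).
by apply: (mem_circ_endpoints (j := i)); rewrite mem_prevD_circ.
Qed.

Lemma nextDK : cancel (nextD D) (prevD D).
Proof.
move=> e; have [/endpoint_circ[i ei]|eEP] := boolP (e \in EP); last first.
  by rewrite !(nextD_id, prevD_id).
have nei : nextD D e \in circ D i by rewrite mem_nextD_circ.
by rewrite (prevDE nei) (nextDE ei) prev_next // uniq_circ.
Qed.

Lemma prevDK : cancel (prevD D) (nextD D).
Proof.
move=> e; have [/endpoint_circ[i ei]|eEP] := boolP (e \in EP); last first.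
  by rewrite !(nextD_id, prevD_id).
have pei : prevD D e \in circ D i by rewrite mem_prevD_circ.
by rewrite (nextDE pei) (prevDE ei) next_prev // uniq_circ.
Qed.

Lemma perm_map_nextD s : uniq s -> (forall e, (prevD D e \in s) = (e \in s)) ->
  perm_eq (map (nextD D) s) s.
Proof.
move=> uniq_s prev_s; apply: uniq_perm => //; first by rewrite (map_inj_uniq (can_inj nextDK)).
by move=> e; rewrite -{1}(prevDK e) (mem_map (can_inj nextDK)).
Qed.

End CircleWalk.

Section Darts.
Variables (n : nat) (D : gauss n).
Hypothesis wfD : wf_gauss D.
Local Notation EP := (endpoints D).
Local Notation used := (@used_dart n D).
Local Notation alpha := (@alphaD n D).
Local Notation sigma := (@sigmaD n D).
Local Notation phi := (@phiD n D).

Definition out_dart (p : nat * bool) : dart D := (inord p.1, p.2, true).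
Definition in_dart (p : nat * bool) : dart D := (inord p.1, p.2, false).
Definition dart_endpoint (x : dart D) : nat * bool := (val x.1.1, x.1.2).

Lemma used_dartE x : used x = (dart_endpoint x \in EP).
Proof. by apply/idP/idP; apply: mem_endpoints_other_end. Qed.

Lemma inord_label a b : (a, b) \in EP -> val (inord a : 'I_(maxlab D).+1) = a.
Proof.
move=> abEP; apply/inordK; rewrite ltnS.
exact: (@leq_bigmax_seq _ _ xpredT (fun e : nat * bool => e.1) _ abEP).
Qed.

Lemma dart_eta x :
  x = if x.2 then out_dart (dart_endpoint x) else in_dart (dart_endpoint x).
Proof. by case: x => [[a u] []]; rewrite /out_dart /in_dart /= inord_val. Qed.

Lemma out_dartK p : p \in EP -> dart_endpoint (out_dart p) = p.
Proof. by case: p => a b aEP; rewrite /dart_endpoint /= (inord_label aEP). Qed.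

Lemma in_dartK p : p \in EP -> dart_endpoint (in_dart p) = p.
Proof. by case: p => a b aEP; rewrite /dart_endpoint /= (inord_label aEP). Qed.

Lemma used_out_dart p : p \in EP -> used (out_dart p).
Proof. by move=> pEP; rewrite used_dartE out_dartK. Qed.

Lemma used_in_dart p : p \in EP -> used (in_dart p).
Proof. by move=> pEP; rewrite used_dartE in_dartK. Qed.

Lemma alphaD_out p : p \in EP -> alpha (out_dart p) = in_dart (nextD D p).
Proof. by case: p => a u aEP; rewrite /alphaD /out_dart /= (inord_label aEP). Qed.

Lemma alphaD_in p : p \in EP -> alpha (in_dart p) = out_dart (prevD D p).
Proof. by case: p => a u aEP; rewrite /alphaD /in_dart /= (inord_label aEP). Qed.

Lemma alphaD_unused x : ~~ used x -> alpha x = (x.1.1, x.1.2, ~~ x.2).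
Proof.
case: x => [[a u] o]; rewrite used_dartE /dart_endpoint /= => xEP.
by case: o; rewrite /alphaD /= ?nextD_id ?prevD_id //= inord_val.
Qed.

Lemma alphaDK : involutive alpha.
Proof.
move=> x; have [ux|unx] := boolP (used x); last first.
  by rewrite (alphaD_unused unx) alphaD_unused //; case: x {unx} => [[a u] o]; rewrite negbK.
rewrite used_dartE in ux; rewrite (dart_eta x); case: x.2.
  by rewrite alphaD_out // alphaD_in ?mem_nextD_endpoints // nextDK.
by rewrite alphaD_in // alphaD_out ?mem_prevD_endpoints // prevDK.
Qed.

Lemma used_alphaD x : used (alpha x) = used x.
Proof.
have [ux|unx] := boolP (used x); last by rewrite alphaD_unused //; apply: negbTE.
rewrite used_dartE in ux; rewrite (dart_eta x); case: x.2.
  by rewrite alphaD_out // used_in_dart // mem_nextD_endpoints.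
by rewrite alphaD_in // used_out_dart // mem_prevD_endpoints.
Qed.

Lemma sigmaD_label x : (sigma x).1.1 = x.1.1.
Proof. by case: x => [[a u] o]; rewrite /sigmaD; case: sgn. Qed.

Lemma used_sigmaD x : used (sigma x) = used x.
Proof. by rewrite /used_dart /= sigmaD_label. Qed.

Lemma used_phiD x : used (phi x) = used x.
Proof. by rewrite /phiD used_sigmaD used_alphaD. Qed.

Lemma sigmaD_inj : injective sigma.
Proof.
move=> x y sxy; have := sigmaD_label x; rewrite sxy sigmaD_label.
case: x sxy => [[a u] o]; case: y => [[b v] w] /= sxy ab; subst b.
by move: sxy; rewrite /sigmaD /=; case: (sgn D (val a)); case: u; case: v; case: o; case: w.
Qed.

Lemma phiD_inj : injective phi.
Proof. exact: inj_comp sigmaD_inj (can_inj alphaDK). Qed.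

Lemma sigmaD_phiD x : sigma x = phi (alpha x).
Proof. by rewrite /phiD alphaDK. Qed.

Lemma froot_phiD x : froot phi (phi x) = froot phi x.
Proof.
apply/(fingraph.rootP (fconnect_sym phiD_inj)).
by rewrite (fconnect_sym phiD_inj); apply: fconnect1.
Qed.

Lemma dart_rel_sym : connect_sym (@dart_rel n D).
Proof.
apply: sym_connect_sym => x y; rewrite /dart_rel /=.
by case: (y == _); case: (x == _); case: (y == _); case: (x == _).
Qed.

End Darts.

Section CrossingTerms.
Variables (n : nat) (D : gauss n) (k : 'I_n).
Hypothesis wfD : wf_gauss D.

(* The contribution of the endpoint [e] to [FM(j,k) - FM(k,j)], where [j] is
   the circle carrying [e]. *)
Definition crossing_term (e : nat * bool) : int :=
  if e.2 then - (crossing_sign D e.1 * ((e.1, false) \in circ D k)%:R)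
  else crossing_sign D e.1 * ((e.1, true) \in circ D k)%:R.

Lemma arrow_count_flip j : arrow_count D (circ D) k j =
  \sum_(e <- circ D j | e.2 && ((e.1, false) \in circ D k)) crossing_sign D e.1.
Proof.
pose flip (e : nat * bool) := (e.1, ~~ e.2).
have flipK : involutive flip by case=> a b; rewrite /flip negbK.
rewrite /arrow_count -[LHS]big_filter -[RHS]big_filter.
rewrite (perm_big (map flip [seq e <- circ D j | e.2 && ((e.1, false) \in circ D k)])).
  by rewrite big_map.
apply: uniq_perm; first by rewrite filter_uniq // uniq_circ.
  by rewrite (map_inj_uniq (can_inj flipK)) filter_uniq // uniq_circ.
move=> x; rewrite -{2}(flipK x) (mem_map (can_inj flipK)) !mem_filter.
by case: x => b [] /=; rewrite ?andbF //= andbC.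
Qed.

Lemma FM_entry_sub_flip j :
  FM_entry D j k - FM_entry D k j = \sum_(e <- circ D j) crossing_term e.
Proof.
rewrite !FM_entryE arrow_count_flip /arrow_count.
rewrite (big_mkcond (fun e => e.2 && _)) (big_mkcond (fun e => (e.2 == false) && _)).
rewrite -sumrB; apply: eq_bigr => -[a []] _ /=; rewrite /crossing_term /=.
  by case: ((a, false) \in circ D k); rewrite ?mulr1 ?mulr0 ?sub0r ?oppr0.
by case: ((a, true) \in circ D k); rewrite ?mulr1 ?mulr0 ?subr0.
Qed.

End CrossingTerms.

Section WindingFunction.
Variables (n : nat) (D : gauss n) (k : 'I_n) (w : dart D -> rat).
Hypothesis wfD : wf_gauss D.
Local Notation EP := (endpoints D).
Local Notation alpha := (@alphaD n D).
Local Notation sigma := (@sigmaD n D).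
Local Notation phi := (@phiD n D).

(* [w] is constant on faces and jumps by one across each arc of circle [k]. *)
Hypothesis w_phi : forall x, w (phi x) = w x.
Hypothesis w_jump :
  {in EP, forall p, w (out_dart D p) - w (in_dart D (nextD D p)) = (p \in circ D k)%:R}.

Lemma winding_sigmaD x : w (sigma x) = w (alpha x).
Proof. by rewrite (sigmaD_phiD wfD) w_phi. Qed.

Lemma winding_crossing e : e \in EP ->
  w (out_dart D e) - w (sigma (in_dart D e)) = (crossing_term D k e)%:~R.
Proof.
case: e => a u eEP.
have e'EP : (a, ~~ u) \in EP by apply: mem_endpoints_other_end eEP.
have pe'EP : prevD D (a, ~~ u) \in EP by rewrite (mem_prevD_endpoints wfD).
have jump_out := w_jump e'EP; have jump_in := w_jump pe'EP.
rewrite -alphaD_out // -winding_sigmaD in jump_out.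
rewrite (prevDK wfD) (mem_prevD_circ wfD) -alphaD_in // -winding_sigmaD in jump_in.
move: jump_out jump_in.
rewrite /crossing_term /crossing_sign /sigmaD /out_dart /in_dart /= (inord_label eEP).
by case: u {eEP e'EP pe'EP} => /=; case: (sgn D a); case: (_ \in circ D k) => /=; lra.
Qed.

Lemma sum_crossing_term j : \sum_(e <- circ D j) crossing_term D k e = 0.
Proof.
apply: (@intr_inj rat); rewrite rmorph_sum /=.
rewrite -(perm_big _ (perm_map_nextD wfD (uniq_circ wfD j) (mem_prevD_circ wfD j))) big_map.
have -> : \sum_(p <- circ D j) (crossing_term D k (nextD D p))%:~R =
          \sum_(p <- circ D j) (w (out_dart D (nextD D p)) - w (out_dart D p)) :> rat.
  rewrite big_seq [RHS]big_seq; apply: eq_bigr => p pj.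
  have pEP : p \in EP := mem_circ_endpoints pj.
  rewrite -winding_crossing ?(mem_nextD_endpoints wfD) //; congr (_ - _).
  by rewrite -(w_phi (out_dart D p)) /phiD alphaD_out.
rewrite sumrB -(big_map (nextD D) xpredT (fun e => w (out_dart D e))).
by rewrite (perm_big _ (perm_map_nextD wfD (uniq_circ wfD j) (mem_prevD_circ wfD j))) subrr.
Qed.

Lemma FM_entry_sym_of_winding j : FM_entry D j k = FM_entry D k j.
Proof. by apply/eqP; rewrite -subr_eq0 FM_entry_sub_flip // sum_crossing_term. Qed.

End WindingFunction.

Section Homology.
Variables (n : nat) (D : gauss n).
Hypothesis wfD : wf_gauss D.
Local Notation EP := (endpoints D).
Local Notation L := (labels D).
Local Notation E := (size EP).
Local Notation V := (size L).
Local Notation T := (dart D).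
Local Notation NT := #|{: T}|.
Local Notation used := (@used_dart n D).
Local Notation alpha := (@alphaD n D).
Local Notation sigma := (@sigmaD n D).
Local Notation phi := (@phiD n D).
Local Notation drel := (@dart_rel n D).
Local Notation out := (out_dart D).
Local Notation inn := (in_dart D).

(* Functions on darts are row vectors, indexed through [enum_rank]. *)
Definition dval (v : 'rV[rat]_NT) (x : T) : rat := v 0 (enum_rank x).

Definition faces : {set T} := [set x | used x && (froot phi x == x)].
Definition components : {set T} := [set x | used x && (fingraph.root drel x == x)].

Lemma card_faces : #|faces| = nfaces D.
Proof. by rewrite /nfaces cardsE; apply: eq_card => x; rewrite !inE andbC. Qed.

Lemma card_components : #|components| = ncomps D.
Proof. by rewrite /ncomps cardsE; apply: eq_card => x; rewrite !inE andbC. Qed.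

Definition face_mx : 'M[rat]_(#|faces|, NT) :=
  \matrix_(f, i) (used (enum_val i) && (froot phi (enum_val i) == enum_val f))%:R.

Lemma rank_face_mx : \rank face_mx = nfaces D.
Proof.
rewrite -card_faces; apply/eqP/row_freeP; exists (\matrix_(i, f) (enum_val i == enum_val f)%:R).
apply/matrixP => f g; rewrite !mxE; under eq_bigr do rewrite !mxE.
rewrite sum_enum_val_eq enum_rankK.
have := enum_valP g; rewrite inE => /andP[-> /eqP ->].
by rewrite (inj_eq enum_val_inj) eq_sym.
Qed.

Lemma face_mx_sub v : (v <= face_mx)%MS ->
  (forall x, dval v (phi x) = dval v x) /\ (forall x, ~~ used x -> dval v x = 0).
Proof.
case/submxP => Y ->; split => [x|x unx]; rewrite /dval !mxE.
  apply: eq_bigr => f _; rewrite !mxE !enum_rankK (used_phiD wfD).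
  by rewrite (froot_phiD wfD).
by apply: big1 => f _; rewrite !mxE enum_rankK (negbTE unx) mulr0.
Qed.

Definition arc (q : 'I_E) : nat * bool := nth (0%N, false) EP q.

Lemma arc_surj p : p \in EP -> exists q, arc q = p.
Proof.
move=> pEP; have ltpE : (index p EP < E)%N by rewrite index_mem.
by exists (Ordinal ltpE); rewrite /arc nth_index.
Qed.

(* Arc [q] runs from the outgoing dart at [arc q] to the incoming dart at the
   next endpoint of its circle. *)
Definition coboundary_mx : 'M[rat]_(NT, E) :=
  \matrix_(i, q) ((enum_val i == out (arc q))%:R - (enum_val i == inn (nextD D (arc q)))%:R).

Lemma coboundary_mxE v q :
  (v *m coboundary_mx) 0 q = dval v (out (arc q)) - dval v (inn (nextD D (arc q))).
Proof. by rewrite mxE; under eq_bigr do rewrite mxE mulrBr; rewrite sumrB !sum_enum_val_eq. Qed.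

Lemma ker_coboundary_alphaD v : (v <= face_mx)%MS -> v *m coboundary_mx = 0 ->
  forall x, dval v (alpha x) = dval v x.
Proof.
move=> /face_mx_sub[_ v0] vB0.
have vE p : p \in EP -> dval v (out p) = dval v (inn (nextD D p)).
  by move=> /arc_surj[q <-]; apply/eqP; rewrite -subr_eq0 -coboundary_mxE vB0 mxE.
move=> x; have [ux|unx] := boolP (used x); last by rewrite !v0 ?(used_alphaD wfD).
rewrite (used_dartE wfD) in ux; rewrite (dart_eta x); case: x.2.
  by rewrite alphaD_out // vE.
by rewrite alphaD_in // vE ?(mem_prevD_endpoints wfD) // (prevDK wfD).
Qed.

Lemma ker_coboundary_sigmaD v : (v <= face_mx)%MS -> v *m coboundary_mx = 0 ->
  forall x, dval v (sigma x) = dval v x.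
Proof.
move=> vF vB0 x; have [v_phi _] := face_mx_sub vF.
by rewrite (sigmaD_phiD wfD) v_phi (ker_coboundary_alphaD vF vB0).
Qed.

Lemma dart_rel_invariant (R : eqType) (K : T -> R) :
  (forall x, K (alpha x) = K x) -> (forall x, K (sigma x) = K x) ->
  forall x, K (fingraph.root drel x) = K x.
Proof.
move=> Ka Ks x; have closedK : closed drel [pred y | K y == K x].
  by move=> y z; rewrite !inE => /or4P[] /eqP ->; rewrite ?Ka ?Ks.
by have := closed_connect closedK (connect_root _ x); rewrite !inE eqxx => /esym/eqP.
Qed.

Lemma root_components x : used x -> fingraph.root drel x \in components.
Proof.
have closed_used : closed drel used.
  move=> y z; rewrite /dart_rel /= => /or4P[] /eqP ->;
  by rewrite -!topredE /= ?used_sigmaD ?(used_alphaD wfD).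
move=> ux; rewrite inE (root_root (@dart_rel_sym n D)) eqxx andbT.
by have := closed_connect closed_used (connect_root _ x); rewrite -!topredE /= ux => <-.
Qed.

Lemma dart_function_eq0 (K : T -> rat) :
  (forall x, K (alpha x) = K x) -> (forall x, K (sigma x) = K x) ->
  {in components, forall c, K c = 0} -> forall x, used x -> K x = 0.
Proof.
by move=> Ka Ks K0 x /root_components/K0; rewrite (dart_rel_invariant Ka Ks).
Qed.

Lemma rank_face_ker_coboundary :
  (\rank (face_mx :&: kermx coboundary_mx) <= ncomps D)%N.
Proof.
rewrite -card_components.
apply: (rank_leq_col_inj (R := \matrix_(i, c) (enum_val i == enum_val c)%:R)) => v.
rewrite sub_capmx => /andP[vF /sub_kermxP vB0] vR0.
have [_ v0] := face_mx_sub vF.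
have v_components : {in components, forall c, dval v c = 0}.
  move=> c cC; have := congr1 (fun M : 'M_(1, _) => M 0 (enum_rank_in cC c)) vR0.
  by rewrite !mxE; under eq_bigr do rewrite mxE; rewrite sum_enum_val_eq (enum_rankK_in cC).
apply/rowP => i; rewrite mxE -[i]enum_valK -/(dval v _).
have [|/v0 //] := boolP (used (enum_val i)).
exact: dart_function_eq0 (ker_coboundary_alphaD vF vB0) (ker_coboundary_sigmaD vF vB0) _ _.
Qed.

Definition vertex (u : 'I_V) : nat := nth 0%N L u.

Lemma vertex_labels u : vertex u \in L.
Proof. exact: mem_nth. Qed.

Lemma vertex_inj : injective vertex.
Proof. by move=> u u' /eqP; rewrite nth_uniq ?undup_uniq // => /eqP /val_inj. Qed.

Lemma mem_labels_endpoints a b : a \in L -> (a, b) \in EP.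
Proof. by rewrite mem_undup => /mapP[[a' b'] aEP /= ->]; apply: mem_endpoints_other_end aEP. Qed.

Lemma vertex_in_endpoints u b : (vertex u, b) \in EP.
Proof. exact/mem_labels_endpoints/vertex_labels. Qed.

Definition incidence_mx : 'M[rat]_(E, V) :=
  \matrix_(q, u) (((arc q).1 == vertex u)%:R - ((nextD D (arc q)).1 == vertex u)%:R).

Lemma sum_endpoints_at (h : nat * bool -> rat) a : a \in L ->
  \sum_(p <- EP) h p * (p.1 == a)%:R = h (a, false) + h (a, true).
Proof.
move=> aL; rewrite (eq_bigr (fun p => if p.1 == a then h p else 0)); last first.
  by move=> p _; case: (p.1 == a); rewrite ?mulr1 ?mulr0.
rewrite -big_mkcond -big_filter (perm_big [:: (a, false); (a, true)]).
  by rewrite big_cons big_seq1.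
apply: uniq_perm; first by rewrite filter_uniq // (uniq_endpoints wfD).
  by rewrite /= inE andbT; apply/eqP; case.
move=> [b u]; rewrite mem_filter !inE !xpair_eqE /=.
by have [->|//] := eqVneq b a; rewrite mem_labels_endpoints //; case: u.
Qed.

Lemma incidence_sum (g : nat * bool -> rat) a : a \in L ->
  \sum_q g (arc q) * (((arc q).1 == a)%:R - ((nextD D (arc q)).1 == a)%:R) =
  g (a, false) + g (a, true) - (g (prevD D (a, false)) + g (prevD D (a, true))).
Proof.
move=> aL.
have -> : \sum_q g (arc q) * (((arc q).1 == a)%:R - ((nextD D (arc q)).1 == a)%:R) =
          \sum_(p <- EP) g p * ((p.1 == a)%:R - ((nextD D p).1 == a)%:R).
  by rewrite (big_nth (0%N, false)) big_mkord.
under eq_bigr do rewrite mulrBr.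
rewrite sumrB sum_endpoints_at //; congr (_ - _).
rewrite -(sum_endpoints_at (fun e => g (prevD D e)) aL).
rewrite -[in RHS](perm_big _ (perm_map_nextD wfD (uniq_endpoints wfD) (mem_prevD_endpoints wfD))).
by rewrite big_map; apply: eq_bigr => p _; rewrite (nextDK wfD).
Qed.

Lemma face_coboundary_incidence : face_mx *m coboundary_mx *m incidence_mx = 0.
Proof.
apply/row_matrixP => f; rewrite row0 !row_mul.
have : (row f face_mx <= face_mx)%MS by apply: row_sub.
move: (row f face_mx) => v /face_mx_sub[v_phi _].
have v_sigma z : dval v (sigma z) = dval v (alpha z) by rewrite (sigmaD_phiD wfD) v_phi.
apply/rowP => u; rewrite !mxE; under eq_bigr do rewrite coboundary_mxE mxE.
rewrite (incidence_sum (fun p => dval v (out p) - dval v (inn (nextD D p))) (vertex_labels u)).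
rewrite !(prevDK wfD) -!alphaD_out ?vertex_in_endpoints // -!alphaD_in ?vertex_in_endpoints //.
rewrite -!v_sigma /sigmaD /out_dart /in_dart /= (inord_label (vertex_in_endpoints u false)).
by case: (sgn D (vertex u)) => /=; ring.
Qed.

Definition circle_flow (k : 'I_n) : 'rV[rat]_E := \row_q ((arc q \in circ D k)%:R).

Lemma circle_flow_incidence k : circle_flow k *m incidence_mx = 0.
Proof.
apply/rowP => u; rewrite !mxE; under eq_bigr do rewrite !mxE.
rewrite (incidence_sum (fun p => (p \in circ D k)%:R) (vertex_labels u)).
by rewrite !(mem_prevD_circ wfD) subrr.
Qed.

Lemma size_endpoints : E = (2 * V)%N.
Proof.
have -> : E = size [seq (a, b) | a <- L, b <- [:: false; true]].
  apply/perm_size/uniq_perm; first exact: (uniq_endpoints wfD).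
    by apply: allpairs_uniq => //; [apply: undup_uniq | move=> [a b] [a' b'] _ _].
  move=> [a b]; apply/idP/allpairsP => [aEP|[[a' b'] /= [aL _ [-> ->]]]].
    exists (a, b); split => //; last by case: b {aEP}.
    by rewrite mem_undup; apply: map_f aEP.
  exact: mem_labels_endpoints.
by rewrite size_allpairs mulnC.
Qed.

Lemma rank_ker_incidence_tr : (\rank (kermx incidence_mx^T) <= ncomps D)%N.
Proof.
rewrite -card_components.
pose R : 'M[rat]_(V, #|components|) :=
  \matrix_(u, c) (vertex u == (dart_endpoint (enum_val c)).1)%:R.
apply: (rank_leq_col_inj (R := R)) => g /sub_kermxP gI0 gR0.
pose G a := \sum_u g 0 u * (vertex u == a)%:R.
have G_vertex u : G (vertex u) = g 0 u.
  rewrite /G (bigD1 u) //= eqxx mulr1 big1 ?addr0 // => u' u'u.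
  by rewrite (inj_eq vertex_inj) (negbTE u'u) mulr0.
have G_arc p : p \in EP -> G p.1 = G (nextD D p).1.
  case/arc_surj=> q <-; apply/eqP; rewrite -subr_eq0.
  have := congr1 (fun M : 'M_(1, _) => M 0 q) gI0; rewrite !mxE => <-.
  by rewrite /G -sumrB; apply/eqP/eq_bigr => u _; rewrite !mxE mulrBr !(eq_sym (vertex u)).
pose K (x : T) := G (dart_endpoint x).1.
have K_sigma x : K (sigma x) = K x by rewrite /K /= sigmaD_label.
have K_alpha x : K (alpha x) = K x.
  have [ux|unx] := boolP (used x); last by rewrite /K alphaD_unused.
  rewrite (used_dartE wfD) in ux; rewrite (dart_eta x) /K; case: x.2.
    rewrite alphaD_out // in_dartK ?(mem_nextD_endpoints wfD) //.
    by rewrite out_dartK // (G_arc _ ux).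
  rewrite alphaD_in // out_dartK ?(mem_prevD_endpoints wfD) // in_dartK //.
  by rewrite G_arc ?(mem_prevD_endpoints wfD) // (prevDK wfD).
have K_components : {in components, forall c, K c = 0}.
  move=> c cC; have := congr1 (fun M : 'M_(1, _) => M 0 (enum_rank_in cC c)) gR0.
  by rewrite !mxE; under eq_bigr do rewrite mxE; rewrite (enum_rankK_in cC).
apply/rowP => u; rewrite [RHS]mxE -G_vertex.
have ux : used (out (vertex u, false)) by apply/used_out_dart/vertex_in_endpoints.
have := dart_function_eq0 K_alpha K_sigma K_components ux.
by rewrite /K out_dartK ?vertex_in_endpoints.
Qed.

Lemma planar_winding k : planar_gauss D ->
  exists w : T -> rat, (forall x, w (phi x) = w x) /\
    {in EP, forall p, w (out p) - w (inn (nextD D p)) = (p \in circ D k)%:R}.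
Proof.
move=> planarD.
have cycles_bound : (kermx incidence_mx <= face_mx *m coboundary_mx)%MS.
  apply: kermx_sub_mul_of_rank face_coboundary_incidence _.
  rewrite rank_face_mx (eqP planarD).
  have rank_cycles := leq_add rank_face_ker_coboundary rank_ker_incidence_tr.
  apply: leq_trans (leq_add rank_cycles (leqnn _)) _.
  by rewrite size_endpoints; lia.
have /submxP[Y flowE] : (circle_flow k <= face_mx *m coboundary_mx)%MS.
  by apply: submx_trans cycles_bound; apply/sub_kermxP/circle_flow_incidence.
have [w_phi _] := face_mx_sub (submxMl Y face_mx).
exists (dval (Y *m face_mx)); split => // p /arc_surj[q <-].
by rewrite -coboundary_mxE -mulmxA -flowE mxE.
Qed.

End Homology.

Lemma FM_entry_sym n (D : gauss n) j k :
  wf_gauss D -> planar_gauss D -> FM_entry D j k = FM_entry D k j.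
Proof.
move=> wfD /(planar_winding wfD k)[w [w_phi w_jump]].
exact: (FM_entry_sym_of_winding wfD w_phi w_jump).
Qed.

Theorem mainTheorem3 (n : nat) (D D' : gauss n) :
  wf_gauss D -> planar_gauss D ->
  FR_equiv D D' -> reduced D' ->
  (forbidden_matrix D')^T = forbidden_matrix D'.
Proof.
move=> wfD planarD DD' _; apply/matrixP => j k; rewrite !mxE.
have [-> //|kj] := eqVneq k j.
have jk : j != k by rewrite eq_sym.
by rewrite -(FM_entry_FR_equiv DD' kj) -(FM_entry_FR_equiv DD' jk) FM_entry_sym.
Qed.
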